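(* Let $n\ge 0$ be an integer and for $k\in\mathbb{Z}_+$ let $v_k(t)=c_k\,e^{-\frac{t^{2n+2}}{2n+2}}L^{(-\frac{1}{2n+2})}_{k}\!\left(\frac{t^{2n+2}}{n+1}\right)$ with $c_k>0$ chosen so that $\|t^nv_k\|_{L^2(\mathbb{R})}=1$. Let $0<\delta\le\frac12$, $B=\frac{1-\delta^{2n+1}}{2n+2}$, and let $C_0>0$ be a constant independent of $k$ such that $|v_k(t)|\le C_0^{k+1}e^{-Bt^{2n+2}}$ for all $k$ and $t$. Then for every $B'$ with $0<B'<B$ there is a constant $C_1>0$ independent of $k$, with $C_1=\mathscr{O}((B-B')^{-2})$, such that $$|v_k'(t)|\le C_1C_0^{\,k}e^{-B't^{2n+2}}$$ for all $k\in\mathbb{Z}_+$ and $t\in\mathbb{R}$.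
   Context: $L^{(a)}_k$ denotes the generalized Laguerre polynomial of degree $k$ and parameter $a$. $v_k$ solves $-v_k''+t^{2(2n+1)}v_k=E_kt^{2n}v_k$ with $E_k=4k(n+1)+2n+1$. *)

From Stdlib Require Import Reals Factorial.
From Coquelicot Require Import Coquelicot.
Open Scope R_scope.

(* gbin_aux b m = prod_{i=1}^{m} (b + i) / i  = binom(b + m, m) (generalized binomial). *)
Fixpoint gbin_aux (b : R) (m : nat) : R :=
  match m with
  | O => 1
  | S m' => gbin_aux b m' * (b + INR (S m')) / INR (S m')
  end.

(* Generalized Laguerre polynomial
   L_k^{(a)}(x) = sum_{j=0}^k (-1)^j binom(k+a, k-j) x^j / j!,
   where binom(k+a, k-j) = gbin_aux (a + j) (k - j). *)
Definition laguerre (a : R) (k : nat) (x : R) : R :=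
  sum_f_R0 (fun j => (-1) ^ j * gbin_aux (a + INR j) (k - j) * x ^ j / INR (fact j)) k.

Definition vfun (n : nat) (c : nat -> R) (k : nat) (t : R) : R :=
  c k * exp (- (t ^ (2 * n + 2)) / INR (2 * n + 2))
      * laguerre (- 1 / INR (2 * n + 2)) k (t ^ (2 * n + 2) / INR (n + 1)).

Definition Bconst (n : nat) (delta : R) : R :=
  (1 - delta ^ (2 * n + 1)) / INR (2 * n + 2).

From Stdlib Require Import Reals Factorial Lra Lia.
From Coquelicot Require Import Coquelicot.
Open Scope R_scope.

(* [v = v_k] solves [v'' = (t^(4n+2) - E_k t^(2n)) v], by Laguerre's equation
   [x L'' + (a + 1 - x) L' + k L = 0].  With [c = B - B'] and [alpha = 2 C^2 / (B c)]
   the energy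
     [v'^2 + (E_k t^(2n) - t^(4n+2)) v^2 - alpha exp (-(B + B') t^(2n+2))]
   has a derivative without [v v'] terms, which the bound [|v| <= C exp (-B t^(2n+2))]
   makes nonnegative for [t >= 0]; as [v] is bounded, the energy is then nonpositive.
   Hence [v'^2 <= alpha exp (-(B + B') t^(2n+2)) + t^(4n+2) v^2], and bounding
   [t^m exp (-c t^(2n+2))] by [1/c] gives
   [|v'| <= C (2/B + 1) / c * exp (-B' t^(2n+2))] for [t >= 0]; [v'] is odd.
   The constant is even [O((B - B')^-1)]. *)

Lemma exp_le_1 (x : R) : x <= 0 -> exp x <= 1.
Proof.
  intros [Hx | ->]; rewrite <- exp_0; [left; apply exp_increasing; exact Hx | lra].
Qed.

Lemma mul_exp_opp_le_1 (x : R) : x * exp (- x) <= 1.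
Proof.
  assert (Hx : x <= exp x) by (pose proof (exp_ineq1_le x); lra).
  rewrite <- exp_0, <- (Rplus_opp_r x), exp_plus.
  apply Rmult_le_compat_r; [left; apply exp_pos | exact Hx].
Qed.

Lemma pow_mul_exp_le (m N : nat) (c t : R) : (m <= N)%nat -> 0 <= t -> 0 < c <= 1 ->
  t ^ m * exp (- c * t ^ N) <= / c.
Proof.
  intros HmN Ht Hc.
  assert (Hc1 : 1 <= / c) by (rewrite <- Rinv_1; apply Rinv_le_contravar; lra).
  assert (HtN : 0 <= t ^ N) by (apply pow_le; exact Ht).
  assert (Htm : 0 <= t ^ m) by (apply pow_le; exact Ht).
  assert (He : 0 < exp (- c * t ^ N)) by apply exp_pos.
  destruct (Rle_lt_dec t 1) as [Ht1 | Ht1].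
  - assert (t ^ m <= 1) by (rewrite <- (pow1 m); apply pow_incr; lra).
    assert (exp (- c * t ^ N) <= 1) by (apply exp_le_1; nra).
    nra.
  - assert (Hm : t ^ m <= t ^ N) by (apply Rle_pow; [lra | exact HmN]).
    assert (HX := mul_exp_opp_le_1 (c * t ^ N)).
    replace (- (c * t ^ N)) with (- c * t ^ N) in HX by ring.
    apply (Rmult_le_reg_l c); [lra |]. rewrite Rinv_r by lra.
    assert (0 <= c * exp (- c * t ^ N)) by nra.
    nra.
Qed.

Lemma pow_opp_double (t : R) (m : nat) : (- t) ^ (2 * m) = t ^ (2 * m).
Proof. rewrite !pow_mult. f_equal. ring. Qed.

Lemma pow_2n2_ge0 (n : nat) (t : R) : 0 <= t ^ (2 * n + 2).
Proof.
  replace (2 * n + 2)%nat with (2 * (n + 1))%nat by lia.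
  rewrite pow_mult. apply pow_le, pow2_ge_0.
Qed.

Lemma Rabs_le_of_sq_le (x y : R) : 0 <= y -> x ^ 2 <= y ^ 2 -> Rabs x <= y.
Proof.
  intros Hy Hxy. rewrite <- (Rabs_pos_eq y Hy).
  apply Rsqr_le_abs_0. unfold Rsqr. simpl in Hxy. lra.
Qed.

Lemma nondecreasing_of_derive_nonneg (f f' : R -> R) (a : R) :
  (forall t, is_derive f t (f' t)) -> (forall t, a <= t -> 0 <= f' t) ->
  forall x y, a <= x -> x <= y -> f x <= f y.
Proof.
  intros Hf Hf' x y Hax Hxy.
  destruct (MVT_gen f x y f') as [z [Hz Hfz]].
  - intros z _. apply Hf.
  - intros z _. apply derivable_continuous_pt, ex_derive_Reals_0. eexists. apply Hf.
  - rewrite Rmin_left, Rmax_right in Hz by exact Hxy.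
    assert (0 <= f' z * (y - x)) by (apply Rmult_le_pos; [apply Hf' | ]; lra).
    lra.
Qed.

(* By the mean value theorem, [f' ^ 2 >= eta] on an interval of length [L] would make
   [f] vary by at least [sqrt eta * L] there. *)
Lemma bounded_exists_small_derive (f f' : R -> R) (M eta a : R) :
  (forall t, is_derive f t (f' t)) -> (forall t, Rabs (f t) <= M) -> 0 < eta ->
  exists t, a <= t /\ f' t ^ 2 < eta.
Proof.
  intros Hf HM Heta.
  assert (HM0 : 0 <= M) by (eapply Rle_trans; [apply Rabs_pos | apply (HM 0)]).
  set (L := 4 * M ^ 2 / eta + 1).
  assert (HL1 : 1 <= L) by (unfold L; assert (0 <= 4 * M ^ 2 / eta) by
    (apply Rle_div_r; [exact Heta | nra]); lra).
  assert (HL : 4 * M ^ 2 < eta * L) by (unfold L; field_simplify; lra).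
  destruct (MVT_gen f a (a + L) f') as [z [Hz Hfz]].
  - intros z _. apply Hf.
  - intros z _. apply derivable_continuous_pt, ex_derive_Reals_0. eexists. apply Hf.
  - rewrite Rmin_left, Rmax_right in Hz by lra.
    exists z. split; [lra |].
    apply Rnot_le_lt. intros Hz2.
    replace (a + L - a) with L in Hfz by ring.
    assert (Ha := proj1 (Rabs_le_between _ _) (HM a)).
    assert (HaL := proj1 (Rabs_le_between _ _) (HM (a + L))).
    assert (Hvar : (f' z * L) ^ 2 <= 4 * M ^ 2) by (rewrite <- Hfz; nra).
    assert (eta * L <= f' z ^ 2 * L ^ 2) by nra.
    nra.
Qed.

Lemma is_derive_sum_pow (b : nat -> R) (m : nat -> nat) (k : nat) (x : R) :
  is_derive (fun x => sum_f_R0 (fun j => b j * x ^ m j) k) x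
    (sum_f_R0 (fun j => b j * (INR (m j) * x ^ pred (m j))) k).
Proof.
  induction k as [|k IH]; simpl.
  - auto_derive; auto; ring.
  - apply (is_derive_plus (fun x => sum_f_R0 (fun j => b j * x ^ m j) k)
                          (fun x => b (S k) * x ^ m (S k))); auto.
    auto_derive; auto; ring.
Qed.

Lemma gbin_aux_S_mul (b : R) (q : nat) :
  gbin_aux b (S q) * INR (S q) = (b + 1) * gbin_aux (b + 1) q.
Proof.
  induction q as [|q IH]; [simpl; field|].
  assert (Hq : INR (S q) <> 0) by (apply not_0_INR; lia).
  assert (HSq : INR (S (S q)) <> 0) by (apply not_0_INR; lia).
  assert (E : gbin_aux b (S q) = (b + 1) * gbin_aux (b + 1) q / INR (S q))
    by (rewrite <- IH; field; exact Hq).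
  change (gbin_aux b (S (S q)) * INR (S (S q)) =
          (b + 1) * (gbin_aux (b + 1) q * (b + 1 + INR (S q)) / INR (S q))).
  change (gbin_aux b (S (S q))) with
    (gbin_aux b (S q) * (b + INR (S (S q))) / INR (S (S q))).
  rewrite E, (S_INR (S q)). field. split; [exact Hq | rewrite <- S_INR; exact HSq].
Qed.

Definition laguerre_coef (a : R) (k j : nat) : R :=
  (-1) ^ j * gbin_aux (a + INR j) (k - j) / INR (fact j).

Definition dlaguerre (a : R) (k : nat) (x : R) : R :=
  sum_f_R0 (fun j => laguerre_coef a k j * (INR j * x ^ pred j)) k.

Definition d2laguerre (a : R) (k : nat) (x : R) : R :=
  sum_f_R0 (fun j => laguerre_coef a k j * INR j * (INR (pred j) * x ^ pred (pred j))) k.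

Lemma laguerreE (a : R) (k : nat) (x : R) :
  laguerre a k x = sum_f_R0 (fun j => laguerre_coef a k j * x ^ j) k.
Proof.
  apply sum_eq; intros j _. unfold laguerre_coef. field. apply INR_fact_neq_0.
Qed.

Lemma is_derive_laguerre (a : R) (k : nat) (x : R) :
  is_derive (laguerre a k) x (dlaguerre a k x).
Proof.
  apply (is_derive_ext (fun x => sum_f_R0 (fun j => laguerre_coef a k j * x ^ j) k)).
  { intros y. symmetry. apply laguerreE. }
  apply (is_derive_sum_pow (laguerre_coef a k) (fun j => j)).
Qed.

Lemma is_derive_dlaguerre (a : R) (k : nat) (x : R) :
  is_derive (dlaguerre a k) x (d2laguerre a k x).
Proof.
  apply (is_derive_ext
    (fun x => sum_f_R0 (fun j => laguerre_coef a k j * INR j * x ^ pred j) k)).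
  { intros y. apply sum_eq. intros j _. ring. }
  apply (is_derive_sum_pow (fun j => laguerre_coef a k j * INR j) pred).
Qed.

Lemma laguerre_coef_S (a : R) (m i : nat) : (i <= m)%nat ->
  laguerre_coef a (S m) (S i) * INR (S i) * (INR (S i) + a)
  = laguerre_coef a (S m) i * (INR i - INR (S m)).
Proof.
  intros Hi. unfold laguerre_coef.
  replace (S m - S i)%nat with (m - i)%nat by lia.
  replace (S m - i)%nat with (S (m - i)) by lia.
  assert (G := gbin_aux_S_mul (a + INR i) (m - i)).
  replace (INR (S (m - i))) with (INR (S m) - INR i) in G
    by (rewrite (S_INR (m - i)), minus_INR, S_INR by lia; ring).
  replace (a + INR (S i)) with (a + INR i + 1) by (rewrite S_INR; ring).
  change (fact (S i)) with (S i * fact i)%nat.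
  assert (Hf := INR_fact_neq_0 i).
  assert (HS : INR (S i) <> 0) by (apply not_0_INR; lia).
  rewrite mult_INR, <- tech_pow_Rmult.
  replace ((-1) ^ i * gbin_aux (a + INR i) (S (m - i)) / INR (fact i) * (INR i - INR (S m)))
    with (- ((-1) ^ i * (gbin_aux (a + INR i) (S (m - i)) * (INR (S m) - INR i)) / INR (fact i)))
    by (field; exact Hf).
  rewrite G. rewrite S_INR in *. field. split; assumption.
Qed.

(* Coefficientwise: after shifting the index of the [x^(j-1)] terms, the
   coefficients match by [laguerre_coef_S]. *)
Lemma laguerre_ode (a : R) (k : nat) (x : R) :
  x * d2laguerre a k x + (a + 1 - x) * dlaguerre a k x + INR k * laguerre a k x = 0.
Proof.
  set (F := fun j => laguerre_coef a k j * INR j * (INR j + a) * x ^ pred j).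
  set (G := fun j => laguerre_coef a k j * (INR j - INR k) * x ^ j).
  assert (HF : x * d2laguerre a k x + (a + 1) * dlaguerre a k x = sum_f_R0 F k).
  { unfold d2laguerre, dlaguerre. rewrite !scal_sum, <- sum_plus.
    apply sum_eq. intros [|[|i]] _; unfold F; simpl; ring. }
  assert (HG : - x * dlaguerre a k x + INR k * laguerre a k x = - sum_f_R0 G k).
  { unfold dlaguerre. rewrite laguerreE.
    replace (- sum_f_R0 G k) with (-1 * sum_f_R0 G k) by ring.
    rewrite !scal_sum, <- sum_plus.
    apply sum_eq. intros [|i] _; unfold G; simpl; ring. }
  assert (HFG : sum_f_R0 F k = sum_f_R0 G k).
  { destruct k as [|m]; [unfold F, G; simpl; ring |].
    rewrite decomp_sum, tech5 by lia.
    replace (F 0%nat) with 0 by (unfold F; simpl; ring).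
    replace (G (S m)) with 0 by (unfold G; ring).
    rewrite Rplus_0_l, Rplus_0_r. apply sum_eq. intros i Hi.
    unfold F, G. simpl pred. rewrite laguerre_coef_S by exact Hi. ring. }
  replace (x * d2laguerre a k x + (a + 1 - x) * dlaguerre a k x + INR k * laguerre a k x)
    with ((x * d2laguerre a k x + (a + 1) * dlaguerre a k x)
          + (- x * dlaguerre a k x + INR k * laguerre a k x)) by ring.
  rewrite HF, HG, HFG. ring.
Qed.

Section EnergyEstimate.

Variables (n : nat) (E C B B' : R) (v v' : R -> R).

Hypothesis v_derive : forall t, is_derive v t (v' t).
Hypothesis v'_derive :
  forall t, is_derive v' t ((t ^ (4 * n + 2) - E * t ^ (2 * n)) * v t).
Hypothesis E_ge0 : 0 <= E.
Hypothesis B'_ge0 : 0 <= B'.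
Hypothesis B'_lt_B : B' < B.
Hypothesis B_le1 : B <= 1.
Hypothesis v_bound : forall t, Rabs (v t) <= C * exp (- B * t ^ (2 * n + 2)).

Let c := B - B'.

Let alpha := 2 * C ^ 2 / (B * c).

Definition energy (t : R) : R :=
  v' t ^ 2 + (E * t ^ (2 * n) - t ^ (4 * n + 2)) * v t ^ 2
  - alpha * exp (- (B + B') * t ^ (2 * n + 2)).

Definition denergy (t : R) : R :=
  (INR (2 * n) * E * t ^ pred (2 * n) - INR (4 * n + 2) * t ^ (4 * n + 1)) * v t ^ 2
  + alpha * (B + B') * INR (2 * n + 2) * t ^ (2 * n + 1)
    * exp (- (B + B') * t ^ (2 * n + 2)).

(* The terms in [v * v'] cancel thanks to the equation satisfied by [v'']. *)
Lemma is_derive_energy (t : R) : is_derive energy t (denergy t).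
Proof.
  unfold energy, denergy.
  remember (2 * n + 2)%nat as N eqn:EN. remember (4 * n + 2)%nat as q eqn:Eq.
  remember (2 * n)%nat as p eqn:Ep.
  auto_derive.
  { split; [eexists; apply v'_derive | split; [eexists; apply v_derive | exact I]]. }
  replace (Derive (fun x => v x) t) with (v' t)
    by (symmetry; apply is_derive_unique, v_derive).
  replace (Derive (fun x => v' x) t) with ((t ^ q - E * t ^ p) * v t)
    by (symmetry; apply is_derive_unique, v'_derive).
  replace (pred q) with (4 * n + 1)%nat by lia.
  replace (pred N) with (2 * n + 1)%nat by lia.
  subst p. ring.
Qed.

Lemma c_pos : 0 < c <= 1.
Proof. unfold c. lra. Qed.

Lemma C_ge0 : 0 <= C.
Proof.
  assert (H := v_bound 0). assert (He := exp_pos (- B * 0 ^ (2 * n + 2))).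
  assert (Ha := Rabs_pos (v 0)). nra.
Qed.

Lemma exp_B_split (u : R) : exp (- B * u) = exp (- c * u) * exp (- B' * u).
Proof. rewrite <- exp_plus. f_equal. unfold c. ring. Qed.

Lemma exp_BB'_split (u : R) :
  exp (- (B + B') * u) = exp (- c * u) * exp (- B' * u) ^ 2.
Proof. simpl. rewrite Rmult_1_r, <- !exp_plus. f_equal. unfold c. ring. Qed.

Lemma v_sq_le (t : R) : v t ^ 2 <= C ^ 2 * exp (- B * t ^ (2 * n + 2)) ^ 2.
Proof.
  rewrite <- pow2_abs, <- Rpow_mult_distr. apply pow_incr.
  split; [apply Rabs_pos | apply v_bound].
Qed.

Lemma pow4n1_v_sq_le (t : R) : 0 <= t ->
  t ^ (4 * n + 1) * v t ^ 2
  <= C ^ 2 / c * (t ^ (2 * n + 1) * exp (- (B + B') * t ^ (2 * n + 2))).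
Proof.
  intros Ht.
  assert (Hc := c_pos).
  assert (Hv := v_sq_le t).
  rewrite exp_BB'_split. rewrite exp_B_split in Hv.
  set (ec := exp (- c * t ^ (2 * n + 2))) in *.
  set (eB' := exp (- B' * t ^ (2 * n + 2))) in *.
  assert (Hec : 0 < ec) by apply exp_pos.
  assert (Ht2n : t ^ (2 * n) * ec <= / c)
    by (apply pow_mul_exp_le; [lia | exact Ht | exact Hc]).
  set (W := t ^ (2 * n + 1) * (ec * eB' ^ 2)).
  assert (HW : 0 <= W)
    by (apply Rmult_le_pos; [apply pow_le; lra | apply Rmult_le_pos; [lra | apply pow2_ge_0]]).
  apply Rle_trans with (t ^ (4 * n + 1) * (C ^ 2 * (ec * eB') ^ 2));
    [apply Rmult_le_compat_l; [apply pow_le, Ht | exact Hv] |].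
  replace (t ^ (4 * n + 1) * (C ^ 2 * (ec * eB') ^ 2)) with (C ^ 2 * W * (t ^ (2 * n) * ec))
    by (unfold W; replace (4 * n + 1)%nat with (2 * n + (2 * n + 1))%nat by lia;
        rewrite (pow_add t (2 * n) (2 * n + 1)); ring).
  replace (C ^ 2 / c * W) with (C ^ 2 * W * / c) by (unfold Rdiv; ring).
  apply Rmult_le_compat_l; [apply Rmult_le_pos; [apply pow2_ge_0 | exact HW] | exact Ht2n].
Qed.

(* This inequality dictates the choice of [alpha]. *)
Lemma alpha_ge : INR (4 * n + 2) * (C ^ 2 / c) <= alpha * (B + B') * INR (2 * n + 2).
Proof.
  assert (Hc := c_pos).
  assert (HC : 0 <= C ^ 2 / c) by (apply Rdiv_le_0_compat; [apply pow2_ge_0 | lra]).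
  assert (Halpha : 2 * (C ^ 2 / c) <= alpha * (B + B')).
  { unfold alpha.
    replace (2 * C ^ 2 / (B * c) * (B + B')) with (2 * (C ^ 2 / c) * (1 + B' / B))
      by (unfold c in *; field; lra).
    assert (0 <= B' / B) by (apply Rdiv_le_0_compat; lra).
    nra. }
  assert (HN : INR (4 * n + 2) = 2 * INR (2 * n + 2) - 2)
    by (rewrite !plus_INR, !mult_INR; simpl; ring).
  assert (HN0 : 0 <= INR (2 * n + 2)) by apply pos_INR.
  rewrite HN. nra.
Qed.

Lemma denergy_nonneg (t : R) : 0 <= t -> 0 <= denergy t.
Proof.
  intros Ht. unfold denergy.
  set (W := t ^ (2 * n + 1) * exp (- (B + B') * t ^ (2 * n + 2))).
  assert (HW : 0 <= W)
    by (apply Rmult_le_pos; [apply pow_le, Ht | left; apply exp_pos]).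
  assert (Hlow : 0 <= INR (2 * n) * E * t ^ pred (2 * n) * v t ^ 2).
  { apply Rmult_le_pos; [| apply pow2_ge_0].
    apply Rmult_le_pos; [apply Rmult_le_pos; [apply pos_INR | exact E_ge0] | apply pow_le, Ht]. }
  assert (Hhigh : INR (4 * n + 2) * (t ^ (4 * n + 1) * v t ^ 2)
                  <= alpha * (B + B') * INR (2 * n + 2) * W).
  { apply Rle_trans with (INR (4 * n + 2) * (C ^ 2 / c * W)).
    - apply Rmult_le_compat_l; [apply pos_INR | exact (pow4n1_v_sq_le t Ht)].
    - rewrite <- Rmult_assoc. apply Rmult_le_compat_r; [exact HW | exact alpha_ge]. }
  unfold W in Hhigh. lra.
Qed.

Lemma energy_nondecreasing (x y : R) : 0 <= x -> x <= y -> energy x <= energy y.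
Proof.
  apply (nondecreasing_of_derive_nonneg energy denergy 0);
    [exact is_derive_energy | exact denergy_nonneg].
Qed.

Lemma v_bounded (t : R) : Rabs (v t) <= C.
Proof.
  eapply Rle_trans; [apply v_bound |].
  rewrite <- (Rmult_1_r C) at 2. apply Rmult_le_compat_l; [exact C_ge0 |].
  apply exp_le_1. assert (H := pow_2n2_ge0 n t). nra.
Qed.

Lemma v_sq_weighted_le (T : R) : 0 <= T -> T * (T ^ (2 * n) * v T ^ 2) <= C ^ 2 / B.
Proof.
  intros HT.
  assert (HB : 0 < B <= 1) by lra.
  assert (Hv := v_sq_le T).
  set (e := exp (- B * T ^ (2 * n + 2))) in Hv.
  assert (He : 0 < e) by apply exp_pos.
  assert (He1 : e <= 1) by (apply exp_le_1; assert (H := pow_2n2_ge0 n T); nra).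
  assert (Hdec : T ^ (2 * n + 1) * e <= / B)
    by (apply pow_mul_exp_le; [lia | exact HT | exact HB]).
  assert (HX : 0 <= T ^ (2 * n + 1) * e) by (assert (0 <= T ^ (2 * n + 1)) by (apply pow_le, HT); nra).
  apply Rle_trans with (C ^ 2 * (T ^ (2 * n + 1) * e) * e).
  - replace (C ^ 2 * (T ^ (2 * n + 1) * e) * e) with (T * T ^ (2 * n) * (C ^ 2 * e ^ 2))
      by (rewrite pow_add; ring).
    rewrite <- Rmult_assoc. apply Rmult_le_compat_l; [| exact Hv].
    apply Rmult_le_pos; [exact HT | apply pow_le, HT].
  - assert (HC2 : 0 <= C ^ 2) by apply pow2_ge_0.
    apply Rle_trans with (C ^ 2 * (T ^ (2 * n + 1) * e)).
    + rewrite <- (Rmult_1_r (C ^ 2 * _)) at 2.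
      apply Rmult_le_compat_l; [apply Rmult_le_pos |]; assumption.
    + apply Rmult_le_compat_l; assumption.
Qed.

(* If [energy] were positive somewhere, it would stay above that value further
   right, while [E t^(2n) v^2] tends to [0]: then [v'^2] would stay away from [0]
   although [v] is bounded. *)
Lemma energy_nonpos (t : R) : 0 <= t -> energy t <= 0.
Proof.
  intros Ht. apply Rnot_lt_le. intros Heps. set (eps := energy t) in Heps.
  set (K := 2 * E * C ^ 2 / (B * eps)).
  destruct (bounded_exists_small_derive v v' C (eps / 2) (Rmax t (K + 1))
              v_derive v_bounded) as [T [HT HvT]]; [lra |].
  assert (HtT : t <= T) by (eapply Rle_trans; [apply Rmax_l | exact HT]).
  assert (HKT : K + 1 <= T) by (eapply Rle_trans; [apply Rmax_r | exact HT]).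
  assert (HK : 0 <= K) by (unfold K; apply Rdiv_le_0_compat; [| apply Rmult_lt_0_compat]; nra).
  assert (Hmono : eps <= energy T) by (apply energy_nondecreasing; lra).
  assert (Htail : E * (T ^ (2 * n) * v T ^ 2) <= eps / 2).
  { assert (HW := v_sq_weighted_le T ltac:(lra)).
    assert (HW0 : 0 <= T ^ (2 * n) * v T ^ 2)
      by (apply Rmult_le_pos; [apply pow_le; lra | apply pow2_ge_0]).
    assert (HEK : eps / 2 * K = E * (C ^ 2 / B)) by (unfold K; field; lra).
    assert (E * (T * (T ^ (2 * n) * v T ^ 2)) <= E * (C ^ 2 / B))
      by (apply Rmult_le_compat_l; assumption).
    nra. }
  assert (Hrest : 0 <= T ^ (4 * n + 2) * v T ^ 2
                       + alpha * exp (- (B + B') * T ^ (2 * n + 2))).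
  { assert (0 <= T ^ (4 * n + 2) * v T ^ 2)
      by (apply Rmult_le_pos; [apply pow_le; lra | apply pow2_ge_0]).
    assert (0 <= alpha) by (unfold alpha, c; apply Rdiv_le_0_compat; nra).
    assert (0 < exp (- (B + B') * T ^ (2 * n + 2))) by apply exp_pos.
    nra. }
  unfold energy in Hmono. lra.
Qed.

Lemma dv_sq_le (t : R) : 0 <= t ->
  v' t ^ 2 <= alpha * exp (- (B + B') * t ^ (2 * n + 2)) + t ^ (4 * n + 2) * v t ^ 2.
Proof.
  intros Ht.
  assert (Hen := energy_nonpos t Ht). unfold energy in Hen.
  assert (0 <= E * t ^ (2 * n) * v t ^ 2).
  { apply Rmult_le_pos; [apply Rmult_le_pos; [exact E_ge0 | apply pow_le, Ht] | apply pow2_ge_0]. }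
  lra.
Qed.

Lemma alpha_exp_le (t : R) :
  alpha * exp (- (B + B') * t ^ (2 * n + 2))
  <= 2 / B * (C ^ 2 / c ^ 2) * exp (- B' * t ^ (2 * n + 2)) ^ 2.
Proof.
  assert (Hc := c_pos).
  rewrite exp_BB'_split.
  set (ec := exp (- c * t ^ (2 * n + 2))).
  assert (Hec : 0 < ec) by apply exp_pos.
  assert (Hec1 : ec <= 1) by (apply exp_le_1; assert (H := pow_2n2_ge0 n t); nra).
  assert (Hic : 0 < / c <= / c ^ 2)
    by (split; [apply Rinv_0_lt_compat | apply Rinv_le_contravar; simpl]; nra).
  replace alpha with (2 / B * C ^ 2 * / c) by (unfold alpha; field; lra).
  replace (2 / B * (C ^ 2 / c ^ 2)) with (2 / B * C ^ 2 * / c ^ 2) by (unfold Rdiv; ring).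
  rewrite <- Rmult_assoc.
  apply Rmult_le_compat_r; [apply pow2_ge_0 |].
  rewrite Rmult_assoc. apply Rmult_le_compat_l.
  - apply Rmult_le_pos; [apply Rlt_le, Rdiv_lt_0_compat; lra | apply pow2_ge_0].
  - nra.
Qed.

Lemma pow4n2_v_sq_le (t : R) : 0 <= t ->
  t ^ (4 * n + 2) * v t ^ 2 <= C ^ 2 / c ^ 2 * exp (- B' * t ^ (2 * n + 2)) ^ 2.
Proof.
  intros Ht.
  assert (Hc := c_pos).
  assert (Hv := v_sq_le t). rewrite exp_B_split in Hv.
  set (ec := exp (- c * t ^ (2 * n + 2))) in *.
  set (eB' := exp (- B' * t ^ (2 * n + 2))) in *.
  assert (Hdec : 0 <= t ^ (2 * n + 1) * ec <= / c).
  { split; [apply Rmult_le_pos; [apply pow_le, Ht | left; apply exp_pos] |].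
    apply pow_mul_exp_le; [lia | exact Ht | exact Hc]. }
  apply Rle_trans with (C ^ 2 * (t ^ (2 * n + 1) * ec) ^ 2 * eB' ^ 2).
  - replace (C ^ 2 * (t ^ (2 * n + 1) * ec) ^ 2 * eB' ^ 2)
      with (t ^ (4 * n + 2) * (C ^ 2 * (ec * eB') ^ 2))
      by (replace (4 * n + 2)%nat with ((2 * n + 1) * 2)%nat by lia; rewrite pow_mult; ring).
    apply Rmult_le_compat_l; [apply pow_le, Ht | exact Hv].
  - unfold Rdiv. rewrite <- pow_inv.
    apply Rmult_le_compat_r; [apply pow2_ge_0 |].
    apply Rmult_le_compat_l; [apply pow2_ge_0 |].
    apply pow_incr. exact Hdec.
Qed.

Lemma dv_bound (t : R) : 0 <= t ->
  Rabs (v' t) <= C * (2 / B + 1) / (B - B') * exp (- B' * t ^ (2 * n + 2)).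
Proof.
  intros Ht.
  assert (Hc := c_pos). assert (HC := C_ge0).
  set (M := 2 / B + 1).
  assert (HM : 1 <= M) by (unfold M; assert (0 < 2 / B) by (apply Rdiv_lt_0_compat; lra); lra).
  set (X := C ^ 2 / c ^ 2 * exp (- B' * t ^ (2 * n + 2)) ^ 2).
  assert (HX : 0 <= X).
  { apply Rmult_le_pos; [apply Rdiv_le_0_compat; [apply pow2_ge_0 | nra] | apply pow2_ge_0]. }
  assert (Hsq : v' t ^ 2 <= M * X).
  { assert (H1 := alpha_exp_le t). assert (H2 := pow4n2_v_sq_le t Ht).
    assert (H3 := dv_sq_le t Ht). fold X in H2.
    replace (2 / B * (C ^ 2 / c ^ 2) * exp (- B' * t ^ (2 * n + 2)) ^ 2) with ((M - 1) * X)
      in H1 by (unfold M, X; ring).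
    lra. }
  apply Rabs_le_of_sq_le.
  - apply Rmult_le_pos; [apply Rdiv_le_0_compat; [nra | exact (proj1 Hc)] | left; apply exp_pos].
  - replace ((C * M / (B - B') * exp (- B' * t ^ (2 * n + 2))) ^ 2) with (M * M * X)
      by (unfold X, c in *; field; lra).
    assert (M * X <= M * M * X) by (apply Rmult_le_compat_r; nra).
    lra.
Qed.

End EnergyEstimate.

Definition Ek (n k : nat) : R := 4 * INR k * (INR n + 1) + 2 * INR n + 1.

Definition dvfun (n : nat) (c : nat -> R) (k : nat) (t : R) : R :=
  let a := - 1 / INR (2 * n + 2) in
  let y := t ^ (2 * n + 2) / INR (n + 1) in
  c k * exp (- (t ^ (2 * n + 2)) / INR (2 * n + 2)) * t ^ (2 * n + 1)
    * (2 * dlaguerre a k y - laguerre a k y).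

Lemma is_derive_vfun (n : nat) (c : nat -> R) (k : nat) (t : R) :
  is_derive (vfun n c k) t (dvfun n c k t).
Proof.
  unfold vfun, dvfun.
  assert (HN : INR (2 * n + 2) = 2 * INR (n + 1)) by (rewrite !plus_INR, mult_INR; simpl; ring).
  assert (Ht : t ^ (2 * n + 2) = t ^ (2 * n + 1) * t)
    by (rewrite (Rmult_comm _ t), tech_pow_Rmult; f_equal; lia).
  assert (HM : 0 < INR (n + 1)) by (apply lt_0_INR; lia).
  remember (2 * n + 2)%nat as N eqn:EN. remember (n + 1)%nat as M eqn:EM.
  auto_derive.
  { eexists. apply is_derive_laguerre. }
  rewrite (is_derive_unique _ _ _ (is_derive_laguerre _ _ _)).
  replace (pred N) with (2 * n + 1)%nat by lia.
  rewrite HN, Ht. unfold Rdiv. field. lra.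
Qed.

Lemma is_derive_dvfun (n : nat) (c : nat -> R) (k : nat) (t : R) :
  is_derive (dvfun n c k) t ((t ^ (4 * n + 2) - Ek n k * t ^ (2 * n)) * vfun n c k t).
Proof.
  unfold vfun, dvfun, Ek.
  assert (HN : INR (2 * n + 2) = 2 * INR (n + 1)) by (rewrite !plus_INR, mult_INR; simpl; ring).
  assert (HN' : INR (2 * n + 1) = 2 * INR (n + 1) - 1) by (rewrite !plus_INR, mult_INR; simpl; ring).
  assert (Hn : INR n = INR (n + 1) - 1) by (rewrite plus_INR; simpl; ring).
  assert (Ht1 : t ^ (2 * n + 1) = t ^ (2 * n) * t) by (rewrite pow_add; ring).
  assert (Ht2 : t ^ (2 * n + 2) = t ^ (2 * n) * t ^ 2) by (rewrite pow_add; ring).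
  assert (Ht4 : t ^ (4 * n + 2) = t ^ (2 * n) * t ^ (2 * n) * t ^ 2)
    by (rewrite <- !pow_add; f_equal; lia).
  assert (HM : 0 < INR (n + 1)) by (apply lt_0_INR; lia).
  rewrite Ht4, Hn.
  remember (2 * n + 2)%nat as N eqn:EN. remember (2 * n + 1)%nat as P eqn:EP.
  remember (n + 1)%nat as M eqn:EM.
  auto_derive.
  { split; [|split; [|exact I]]; eexists;
      [apply is_derive_dlaguerre | apply is_derive_laguerre]. }
  rewrite (is_derive_unique _ _ _ (is_derive_laguerre _ _ _)),
          (is_derive_unique _ _ _ (is_derive_dlaguerre _ _ _)).
  replace (pred N) with P by lia. replace (pred P) with (2 * n)%nat by lia.
  rewrite HN, HN', Ht1, Ht2.
  set (y := t ^ (2 * n) * t ^ 2 / INR M).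
  set (a := -1 / (2 * INR M)).
  change (t ^ (2 * n) * t ^ 2 * / INR M) with y.
  set (e := exp (- (t ^ (2 * n) * t ^ 2) / (2 * INR M))).
  change (exp (- (t ^ (2 * n) * t ^ 2) * / (2 * INR M))) with e.
  (* The difference of the two sides is a multiple of Laguerre's equation at [y]. *)
  apply Rminus_diag_uniq.
  transitivity (4 * c k * e * t ^ (2 * n) * INR M *
    (y * d2laguerre a k y + (a + 1 - y) * dlaguerre a k y + INR k * laguerre a k y)).
  - unfold y, a. field. lra.
  - rewrite laguerre_ode. ring.
Qed.

Lemma dvfun_opp (n : nat) (c : nat -> R) (k : nat) (t : R) :
  dvfun n c k (- t) = - dvfun n c k t.
Proof.
  assert (Ev : forall x, x ^ (2 * n + 2) = x ^ (2 * (n + 1))) by (intros; f_equal; lia).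
  unfold dvfun. rewrite !Ev, !pow_opp_double, !pow_add, !pow_opp_double. ring.
Qed.

Lemma Ek_ge0 (n k : nat) : 0 <= Ek n k.
Proof. unfold Ek. pose proof (pos_INR n). pose proof (pos_INR k). nra. Qed.

Lemma dvfun_bound (n : nat) (c : nat -> R) (k : nat) (C B B' : R) :
  0 <= B' < B -> B <= 1 ->
  (forall t, Rabs (vfun n c k t) <= C * exp (- B * t ^ (2 * n + 2))) ->
  forall t, Rabs (dvfun n c k t) <= C * (2 / B + 1) / (B - B') * exp (- B' * t ^ (2 * n + 2)).
Proof.
  intros HB' HB Hv.
  assert (Hpos : forall t, 0 <= t -> Rabs (dvfun n c k t)
                   <= C * (2 / B + 1) / (B - B') * exp (- B' * t ^ (2 * n + 2))).
  { intros t Ht. apply (dv_bound n (Ek n k) C B B' (vfun n c k));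
      auto using is_derive_vfun, is_derive_dvfun, Ek_ge0; lra. }
  intros t. destruct (Rle_or_lt 0 t) as [Ht | Ht]; [exact (Hpos t Ht) |].
  replace (dvfun n c k t) with (- dvfun n c k (- t)) by (rewrite dvfun_opp; ring).
  replace (t ^ (2 * n + 2)) with ((- t) ^ (2 * n + 2))
    by (replace (2 * n + 2)%nat with (2 * (n + 1))%nat by lia; apply pow_opp_double).
  rewrite Rabs_Ropp. apply Hpos. lra.
Qed.

Lemma Bconst_pos_le1 (n : nat) (delta : R) : 0 < delta < 1 -> 0 < Bconst n delta <= 1.
Proof.
  intros Hdelta. unfold Bconst.
  destruct (pow_lt_1_compat delta (2 * n + 1)) as [Hd0 Hd1]; [lra | lia |].
  assert (HN : 2 <= INR (2 * n + 2))
    by (rewrite plus_INR, mult_INR; simpl; pose proof (pos_INR n); lra).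
  split.
  - apply Rdiv_lt_0_compat; lra.
  - apply Rle_div_l; lra.
Qed.

Theorem proposition5p5 (n : nat) (delta C0 : R) (c : nat -> R) :
  0 < delta <= 1 / 2 ->
  0 < C0 ->
  (forall k : nat, 0 < c k) ->
  (forall k : nat,
      is_RInt_gen (fun t => (t ^ n * vfun n c k t) ^ 2)
        (Rbar_locally m_infty) (Rbar_locally p_infty) 1) ->
  (forall (k : nat) (t : R),
      Rabs (vfun n c k t) <= C0 ^ (k + 1) * exp (- Bconst n delta * t ^ (2 * n + 2))) ->
  exists K : R, 0 < K /\
    forall B' : R, 0 < B' < Bconst n delta ->
      exists C1 : R, 0 < C1 /\ C1 <= K / (Bconst n delta - B') ^ 2 /\
        forall (k : nat) (t : R),
          Rabs (Derive (vfun n c k) t) <= C1 * C0 ^ k * exp (- B' * t ^ (2 * n + 2)).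
Proof.
  intros Hdelta HC0 _ _ Hbound.
  destruct (Bconst_pos_le1 n delta) as [HB0 HB1]; [lra |].
  set (B := Bconst n delta) in *.
  set (M := 2 / B + 1).
  assert (HM : 0 < M) by (unfold M; assert (0 < 2 / B) by (apply Rdiv_lt_0_compat; lra); lra).
  exists (C0 * M). split; [apply Rmult_lt_0_compat; lra |].
  intros B' HB'.
  exists (C0 * M / (B - B')). split; [| split].
  - apply Rdiv_lt_0_compat; [apply Rmult_lt_0_compat |]; lra.
  - replace (C0 * M / (B - B') ^ 2) with (C0 * M / (B - B') * / (B - B')) by (field; lra).
    assert (1 <= / (B - B')) by (rewrite <- Rinv_1; apply Rinv_le_contravar; lra).
    assert (0 < C0 * M / (B - B')) by (apply Rdiv_lt_0_compat; [apply Rmult_lt_0_compat |]; lra).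
    nra.
  - intros k t.
    rewrite (is_derive_unique _ _ _ (is_derive_vfun n c k t)).
    replace (C0 * M / (B - B') * C0 ^ k) with (C0 ^ (k + 1) * M / (B - B'))
      by (rewrite pow_add; field; lra).
    apply dvfun_bound; [lra | exact HB1 | exact (Hbound k)].
Qed.
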